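(* Let $S$ be an inverse semigroup (with zero), let $\beta\colon S\to\mathsf{B}(S)$ be its Booleanization, let $I$ be the Cuntz-Krieger ideal of $\mathsf{B}(S)$, let $\mathsf{T}(S)=\mathsf{B}(S)/\varepsilon_I$ be the Exel completion of $S$, and let $\tau=\nu\circ\beta\colon S\to\mathsf{T}(S)$, where $\nu\colon\mathsf{B}(S)\to\mathsf{T}(S)$ is the natural quotient morphism. Then $\tau$ is a cover-to-join map, and it is universal among cover-to-join maps from $S$ to Boolean inverse semigroups: for every cover-to-join map $\theta\colon S\to T$ into a Boolean inverse semigroup $T$ there is a unique morphism of Boolean inverse semigroups $\theta'\colon\mathsf{T}(S)\to T$ such that $\theta'\circ\tau=\theta$.
   Context: All inverse semigroups have a zero and all homomorphisms preserve the zero; no identity element is assumed. For $s$ in an inverse semigroup, $\mathbf{d}(s)=s^{-1}s$, $\mathbf{r}(s)=ss^{-1}$; the natural partial order is $s\le t$ iff $s=t\,s^{-1}s$; $a^{\downarrow}=\{s: s\le a\}$. Elements $s,t$ are compatible ($s\sim t$) if $s^{-1}t$ and $st^{-1}$ are idempotents. An inverse semigroup is distributive if every compatible pair has a join and multiplication distributes over such joins; it is Boolean if moreover its semilattice of idempotents is a generalized Boolean algebra (a distributive lattice with bottom in which every principal order ideal is a unital Boolean algebra). In a Boolean inverse semigroup, if $b\le a$ then $a\setminus b$ denotes $a(\mathbf{d}(a)\setminus\mathbf{d}(b))$. A morphism of Boolean inverse semigroups is a zero-preserving homomorphism that preserves joins of compatible pairs. An additive ideal of a Boolean inverse semigroup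 is a semigroup ideal closed under joins of compatible pairs; for an additive ideal $I$ of $B$, $\varepsilon_I$ is the relation $(a,b)\in\varepsilon_I$ iff there is $c\le a,b$ with $a\setminus c,\ b\setminus c\in I$; it is a congruence and $B/\varepsilon_I$ is a Boolean inverse semigroup. A finite subset $\{a_1,\dots,a_m\}\subseteq a^{\downarrow}$ is a cover of $a$ if for every $0\ne x\le a$ there is $i$ with $x\wedge a_i\ne 0$ (elements of a principal order ideal are pairwise compatible and so have meets). A cover-to-join map is a homomorphism $\theta\colon S\to T$ into a Boolean inverse semigroup $T$ such that whenever $\{a_1,\dots,a_m\}$ is a cover of $a$, we have $\theta(a)=\theta(a_1)\vee\dots\vee\theta(a_m)$. The Booleanization of $S$ is a Boolean inverse semigroup $\mathsf{B}(S)$ with an injective homomorphism $\beta\colon S\to\mathsf{B}(S)$ such that for every homomorphism $\theta\colon S\to T$ into a Boolean inverse semigroup there is a unique morphism $\theta'\colon\mathsf{B}(S)\to T$ with $\theta'\beta=\theta$. The Cuntz-Krieger ideal $I$ of $\mathsf{B}(S)$ is the smallest additive ideal containing all elements $\beta(a)\setminus(\beta(a_1)\vee\dots\vee\beta(a_m))$ where $\{a_1,\dots,a_m\}$ is a cover of $a$ in $S$. *)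

From Stdlib Require Import List.

Record invsg := InvSg {
  car :> Type;
  mul : car -> car -> car;
  inv : car -> car;
  zero : car;
  mulA : forall a b c, mul a (mul b c) = mul (mul a b) c;
  mul0s : forall a, mul zero a = zero;
  muls0 : forall a, mul a zero = zero;
  inv_l : forall a, mul (mul a (inv a)) a = a;
  inv_r : forall a, mul (mul (inv a) a) (inv a) = inv a;
  inv_uniq : forall a b, mul (mul a b) a = a -> mul (mul b a) b = b -> b = inv a
}.

Arguments mul {i} _ _.
Arguments inv {i} _.
Arguments zero {i}.

Section Defs.
Context {S : invsg}.

Definition idem (e : S) : Prop := mul e e = e.
Definition dom (a : S) : S := mul (inv a) a.
Definition leo (s t : S) : Prop := s = mul t (dom s).
Definition compat (s t : S) : Prop := idem (mul (inv s) t) /\ idem (mul s (inv t)).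

Definition is_lub (P : S -> Prop) (j : S) : Prop :=
  (forall x, P x -> leo x j) /\ (forall u, (forall x, P x -> leo x u) -> leo j u).
Definition is_join (j a b : S) : Prop := is_lub (fun x => x = a \/ x = b) j.
Definition is_meet (m a b : S) : Prop :=
  (leo m a /\ leo m b) /\ (forall u, leo u a -> leo u b -> leo u m).

Definition distributive : Prop :=
  (forall a b, compat a b -> exists j, is_join j a b) /\
  (forall a b j c, compat a b -> is_join j a b ->
      is_join (mul c j) (mul c a) (mul c b) /\ is_join (mul j c) (mul a c) (mul b c)).

Definition idem_join (j e f : S) : Prop :=
  idem j /\ leo e j /\ leo f j /\ (forall u, idem u -> leo e u -> leo f u -> leo j u).

(* E(S) is a generalized Boolean algebra: a lattice (meet = product, bottom 0),
   distributive, and every principal ideal e^down is a (unital) Boolean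
   algebra, i.e. relatively complemented. *)
Definition gen_boolean_idem : Prop :=
  (forall e f, idem e -> idem f -> exists j, idem_join j e f) /\
  (forall e f g j, idem e -> idem f -> idem g -> idem_join j f g ->
      idem_join (mul e j) (mul e f) (mul e g)) /\
  (forall e f, idem e -> idem f -> leo f e ->
      exists g, idem g /\ leo g e /\ mul f g = zero /\ idem_join e f g).

Definition boolean : Prop := distributive /\ gen_boolean_idem.

(* x = a \ b := a (d(a) \ d(b)), with d(a)\d(b) the complement of d(b) in d(a)^down *)
Definition is_diff (x a b : S) : Prop :=
  exists g, idem g /\ leo g (dom a) /\ mul (dom b) g = zero /\
            idem_join (dom a) (dom b) g /\ x = mul a g.

Definition additive_ideal (J : S -> Prop) : Prop :=
  (forall a s, J a -> J (mul s a) /\ J (mul a s)) /\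
  (forall a b j, J a -> J b -> compat a b -> is_join j a b -> J j).

Definition cover (a : S) (l : list S) : Prop :=
  (forall x, In x l -> leo x a) /\
  (forall x, x <> zero -> leo x a ->
     exists y, In y l /\ exists m, is_meet m x y /\ m <> zero).

Definition eps (I : S -> Prop) (a b : S) : Prop :=
  exists c x y, leo c a /\ leo c b /\ is_diff x a c /\ is_diff y b c /\ I x /\ I y.

End Defs.

Arguments boolean : clear implicits.

Definition is_hom {S T : invsg} (f : S -> T) : Prop :=
  (forall a b, f (mul a b) = mul (f a) (f b)) /\ f zero = zero.

Definition is_morphism {S T : invsg} (f : S -> T) : Prop :=
  is_hom f /\ (forall a b j, compat a b -> is_join j a b -> is_join (f j) (f a) (f b)).

Definition cover_to_join {S T : invsg} (theta : S -> T) : Prop :=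
  is_hom theta /\
  (forall (a : S) l, cover a l -> is_lub (fun y => exists z, In z l /\ y = theta z) (theta a)).

Definition unique_factor {S B T : invsg} (f : S -> B) (theta : S -> T) : Prop :=
  exists theta' : B -> T, is_morphism theta' /\ (forall s, theta' (f s) = theta s) /\
    (forall theta'' : B -> T, is_morphism theta'' -> (forall s, theta'' (f s) = theta s) ->
       forall x, theta'' x = theta' x).

Definition is_booleanization {S B : invsg} (beta : S -> B) : Prop :=
  boolean B /\ is_hom beta /\ (forall s t, beta s = beta t -> s = t) /\
  (forall T : invsg, boolean T -> forall theta : S -> T, is_hom theta ->
     unique_factor beta theta).

Definition CK_gen {S B : invsg} (beta : S -> B) (x : B) : Prop :=
  exists (a : S) (l : list S) (j : B), cover a l /\
    is_lub (fun y => exists z, In z l /\ y = beta z) j /\ is_diff x (beta a) j.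

Definition CK_ideal {S B : invsg} (beta : S -> B) (x : B) : Prop :=
  forall J : B -> Prop, additive_ideal J -> (forall y, CK_gen beta y -> J y) -> J x.

(* For [y <= x], the congruence [eps I] identifies [x] with [y]
   exactly when [x \ y] lies in the additive ideal [I].  Hence [nu] identifies
   [beta a] with [beta a_1 v ... v beta a_m] whenever the [a_i] cover [a]; as a
   complement computation in the generalized Boolean algebra of idempotents shows
   that [nu] preserves compatible joins, [tau] is cover-to-join.  Conversely,
   if [theta] is cover-to-join, its extension [theta'] to [B(S)] kills the
   generators of the Cuntz-Krieger ideal, hence the whole ideal, hence respects
   [eps I]; it therefore factors through the surjection [nu], uniquely because
   extensions along [beta] are unique. *)

From Stdlib Require Import List IndefiniteDescription.

Local Notation "a ** b" := (mul a b) (at level 40, left associativity).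

Arguments mulA {i} a b c.
Arguments mul0s {i} a.
Arguments muls0 {i} a.
Arguments inv_l {i} a.
Arguments inv_r {i} a.
Arguments inv_uniq {i} a b _ _.

Ltac rassoc := repeat rewrite <- mulA.
Ltac rassoc_in H := repeat rewrite <- mulA in H.

Section InverseSemigroup.
Context {S : invsg}.
Implicit Types a b c e f g h s t u x y z : S.

Lemma inv_inv a : inv (inv a) = a.
Proof. symmetry. apply inv_uniq; [apply inv_r | apply inv_l]. Qed.

Lemma inv_l_assoc a z : a ** (inv a ** (a ** z)) = a ** z.
Proof. rewrite !mulA, inv_l. reflexivity. Qed.

Lemma inv_r_assoc a z : inv a ** (a ** (inv a ** z)) = inv a ** z.
Proof. rewrite !mulA, inv_r. reflexivity. Qed.

Lemma idem_l e z : idem e -> e ** (e ** z) = e ** z.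
Proof. intro He. rewrite mulA, He. reflexivity. Qed.

Lemma idem_inv e : idem e -> inv e = e.
Proof. intro He. symmetry. apply inv_uniq; rewrite !He; reflexivity. Qed.

Lemma idem_mul e f : idem e -> idem f -> idem (e ** f).
Proof.
  intros He Hf.
  set (x := inv (e ** f)).
  assert (Hx1 : e ** (f ** (x ** (e ** f))) = e ** f).
  { pose proof (inv_l (e ** f)) as H. rassoc_in H. exact H. }
  assert (Hx2 : forall z, x ** (e ** (f ** (x ** z))) = x ** z).
  { intro z. pose proof (f_equal (fun t => t ** z) (inv_r (e ** f))) as H. cbv beta in H.
    rassoc_in H. exact H. }
  (* [f x e] is another inverse of [e f], hence equals [x] *)
  assert (Hfxe : f ** (x ** e) = x).
  { apply inv_uniq; rassoc; rewrite (idem_l f), (idem_l e) by assumption.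
    - exact Hx1.
    - rewrite Hx2. reflexivity. }
  assert (Hx : idem x).
  { unfold idem. rewrite <- Hfxe at 1 2. rassoc. rewrite Hx2, Hfxe. reflexivity. }
  unfold x in Hx. rewrite <- (inv_inv (e ** f)), (idem_inv _ Hx). exact Hx.
Qed.

Lemma idem_comm e f : idem e -> idem f -> e ** f = f ** e.
Proof.
  intros He Hf.
  rewrite <- (idem_inv _ (idem_mul e f He Hf)). symmetry. apply inv_uniq; rassoc.
  - rewrite (idem_l f), (idem_l e) by assumption. rewrite mulA. exact (idem_mul e f He Hf).
  - rewrite (idem_l e), (idem_l f) by assumption. rewrite mulA. exact (idem_mul f e Hf He).
Qed.

Lemma dom_idem a : idem (dom a).
Proof. unfold idem, dom. rewrite (mulA _ (inv a)), inv_r. reflexivity. Qed.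

Lemma ran_idem a : idem (a ** inv a).
Proof. pose proof (dom_idem (inv a)) as H. unfold dom in H. rewrite inv_inv in H. exact H. Qed.

Lemma mul_inv_mul a : a ** (inv a ** a) = a.
Proof. rewrite mulA. apply inv_l. Qed.

Lemma mul_dom a : a ** dom a = a.
Proof. apply mul_inv_mul. Qed.

Lemma inv_mul_inv a : inv a ** (a ** inv a) = inv a.
Proof. rewrite mulA. apply inv_r. Qed.

Lemma inv_mul a b : inv (a ** b) = inv b ** inv a.
Proof.
  symmetry. apply inv_uniq.
  - transitivity (a ** ((b ** inv b) ** dom a) ** b); [unfold dom; rassoc; reflexivity|].
    rewrite (idem_comm _ _ (ran_idem b) (dom_idem a)). unfold dom. rassoc.
    rewrite inv_l_assoc, mul_inv_mul. reflexivity.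
  - transitivity (inv b ** (dom a ** (b ** inv b)) ** inv a); [unfold dom; rassoc; reflexivity|].
    rewrite <- (idem_comm _ _ (ran_idem b) (dom_idem a)). unfold dom. rassoc.
    rewrite inv_r_assoc, inv_mul_inv. reflexivity.
Qed.

Lemma dom_of_idem e : idem e -> dom e = e.
Proof. intro He. unfold dom. rewrite idem_inv by exact He. exact He. Qed.

Lemma idem_zero : idem (@zero S).
Proof. apply mul0s. Qed.

Lemma dom_zero : dom (@zero S) = zero.
Proof. apply muls0. Qed.

Lemma dom_mul_idem t e : idem e -> dom (t ** e) = dom t ** e.
Proof.
  intro He. unfold dom. rewrite inv_mul, (idem_inv e He).
  transitivity (e ** dom t ** e); [unfold dom; rassoc; reflexivity|].
  rewrite (idem_comm e (dom t)) by (apply dom_idem || exact He).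
  unfold dom. rassoc. rewrite He. reflexivity.
Qed.

Lemma leo_refl s : leo s s.
Proof. unfold leo, dom. symmetry. apply mul_inv_mul. Qed.

Lemma leo_mul_idem t e : idem e -> leo (t ** e) t.
Proof.
  intro He. unfold leo. rewrite dom_mul_idem by exact He.
  unfold dom. rassoc. rewrite inv_l_assoc. reflexivity.
Qed.

Lemma leo_iff_idem s t : leo s t <-> exists e, idem e /\ s = t ** e.
Proof.
  split.
  - intro H. exists (dom s). split; [apply dom_idem | exact H].
  - intros [e [He ->]]. apply leo_mul_idem. exact He.
Qed.

Lemma leo_dom s t : leo s t -> dom s = dom t ** dom s.
Proof.
  intro H. apply leo_iff_idem in H. destruct H as [e [He ->]].
  rewrite dom_mul_idem by exact He. rewrite mulA, (dom_idem t). reflexivity.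
Qed.

Lemma leo_dom_leo s t : leo s t -> leo (dom s) (dom t).
Proof.
  intro H. apply leo_iff_idem. exists (dom s). split; [apply dom_idem | apply leo_dom, H].
Qed.

Lemma leo_trans s t u : leo s t -> leo t u -> leo s u.
Proof.
  intros H1 H2. apply leo_iff_idem in H1, H2.
  destruct H1 as [e1 [He1 ->]], H2 as [e2 [He2 ->]].
  apply leo_iff_idem. exists (e2 ** e1). split; [apply idem_mul; assumption | symmetry; apply mulA].
Qed.

Lemma leo_antisym s t : leo s t -> leo t s -> s = t.
Proof.
  intros H1 H2.
  assert (Hd : dom s = dom t).
  { rewrite (leo_dom s t H1), (idem_comm _ _ (dom_idem t) (dom_idem s)).
    symmetry. apply leo_dom, H2. }
  rewrite H1, Hd. symmetry. apply leo_refl.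
Qed.

Lemma leo_mul_idem_eq s t e : leo s (t ** e) -> idem e -> s = s ** e.
Proof.
  intros H He. unfold leo in H. rewrite H at 2.
  rewrite <- mulA, (idem_comm (dom s) e (dom_idem s) He), mulA, <- (mulA t e e), He.
  exact H.
Qed.

Lemma leo_zero a : leo zero a.
Proof. unfold leo. rewrite dom_zero, muls0. reflexivity. Qed.

Lemma leo_idem e f : idem f -> leo e f -> idem e.
Proof. intros Hf H. rewrite H. apply idem_mul; [exact Hf | apply dom_idem]. Qed.

Lemma leo_idem_eq e f : idem f -> leo e f -> e = f ** e.
Proof.
  intros Hf H. pose proof (leo_idem e f Hf H) as He.
  unfold leo in H. rewrite H at 1. rewrite dom_of_idem by exact He. reflexivity.
Qed.

Lemma leo_of_idem_eq e f : idem e -> e = f ** e -> leo e f.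
Proof. intros He H. unfold leo. rewrite dom_of_idem by exact He. exact H. Qed.

Lemma conj_idem a e : idem e -> idem (a ** e ** inv a).
Proof.
  intro He. unfold idem.
  transitivity (a ** (e ** dom a) ** e ** inv a); [unfold dom; rassoc; reflexivity|].
  rewrite (idem_comm e (dom a)) by (apply dom_idem || exact He).
  unfold dom. rassoc. rewrite inv_l_assoc, (idem_l e) by exact He. reflexivity.
Qed.

Lemma compat_below s t a : leo s a -> leo t a -> compat s t.
Proof.
  intros H1 H2. apply leo_iff_idem in H1, H2.
  destruct H1 as [e1 [He1 ->]], H2 as [e2 [He2 ->]].
  split; rewrite inv_mul.
  - rewrite (idem_inv e1 He1).
    replace (e1 ** inv a ** (a ** e2)) with (e1 ** dom a ** e2)
      by (unfold dom; rassoc; reflexivity).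
    apply idem_mul; [apply idem_mul|]; auto using dom_idem.
  - rewrite (idem_inv e2 He2).
    replace (a ** e1 ** (e2 ** inv a)) with (a ** (e1 ** e2) ** inv a) by (rassoc; reflexivity).
    apply conj_idem, idem_mul; assumption.
Qed.

Lemma compat_idem e f : idem e -> idem f -> compat e f.
Proof.
  intros He Hf. split.
  - rewrite (idem_inv e He). apply idem_mul; assumption.
  - rewrite (idem_inv f Hf). apply idem_mul; assumption.
Qed.

Lemma idem_join_zero e : idem e -> idem_join e e zero.
Proof.
  intro He. split; [exact He|]. split; [apply leo_refl|]. split; [apply leo_zero|].
  intros u _ H _. exact H.
Qed.

Lemma diff_self a : is_diff zero a a.
Proof.
  exists zero. split; [apply idem_zero|]. split; [apply leo_zero|]. split; [apply muls0|].
  split; [apply idem_join_zero, dom_idem | symmetry; apply muls0].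
Qed.

Lemma lub_unique (P : S -> Prop) j j' : is_lub P j -> is_lub P j' -> j = j'.
Proof. intros [H1 H2] [H1' H2']. apply leo_antisym; auto. Qed.

Lemma lub_ext (P Q : S -> Prop) j : (forall x, P x <-> Q x) -> is_lub P j -> is_lub Q j.
Proof.
  intros E [H1 H2]. split.
  - intros x Hx. apply H1, E, Hx.
  - intros u Hu. apply H2. intros x Hx. apply Hu, E, Hx.
Qed.

Lemma join_ub1 j a b : is_join j a b -> leo a j.
Proof. intros [H _]. apply H; auto. Qed.

Lemma join_ub2 j a b : is_join j a b -> leo b j.
Proof. intros [H _]. apply H; auto. Qed.

Lemma join_least j a b u : is_join j a b -> leo a u -> leo b u -> leo j u.
Proof. intros [_ H] Ha Hb. apply H. intros x [-> | ->]; assumption. Qed.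

Lemma join_comm j a b : is_join j a b -> is_join j b a.
Proof. apply lub_ext. tauto. Qed.

Lemma join_zero_l j b : is_join j zero b -> j = b.
Proof.
  intro H. apply leo_antisym.
  - apply (join_least j zero b b H); [apply leo_zero | apply leo_refl].
  - apply (join_ub2 j zero b H).
Qed.

Lemma join_zero_r j a : is_join j a zero -> j = a.
Proof. intro H. apply join_zero_l, join_comm, H. Qed.

Lemma join_idem j e f : idem e -> idem f -> is_join j e f -> idem j.
Proof.
  intros He Hf H. apply (leo_idem j (dom j) (dom_idem j)).
  apply (join_least j e f _ H).
  - rewrite <- (dom_of_idem e He). apply leo_dom_leo, (join_ub1 j e f H).
  - rewrite <- (dom_of_idem f Hf). apply leo_dom_leo, (join_ub2 j e f H).
Qed.

Lemma lub_cons (P : S -> Prop) J x j : is_lub P J -> is_join j x J ->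
  is_lub (fun y => y = x \/ P y) j.
Proof.
  intros [HJ1 HJ2] Hj. split.
  - intros y [-> | Hy]; [exact (join_ub1 _ _ _ Hj)|].
    apply (leo_trans _ J); [apply HJ1, Hy | exact (join_ub2 _ _ _ Hj)].
  - intros u Hu. apply (join_least j x J u Hj); [apply Hu; left; reflexivity|].
    apply HJ2. intros y Hy. apply Hu. right. exact Hy.
Qed.

End InverseSemigroup.

Section Homomorphism.
Context {S T : invsg} (f : S -> T) (hf : is_hom f).

Lemma hom_mul a b : f (a ** b) = f a ** f b.
Proof. apply hf. Qed.

Lemma hom_zero : f zero = zero.
Proof. apply hf. Qed.

Lemma hom_inv a : f (inv a) = inv (f a).
Proof. apply inv_uniq; rewrite <- !hom_mul; [rewrite inv_l | rewrite inv_r]; reflexivity. Qed.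

Lemma hom_idem e : idem e -> idem (f e).
Proof. unfold idem. intro H. rewrite <- hom_mul, H. reflexivity. Qed.

Lemma hom_dom a : f (dom a) = dom (f a).
Proof. unfold dom. rewrite hom_mul, hom_inv. reflexivity. Qed.

Lemma hom_leo s t : leo s t -> leo (f s) (f t).
Proof. unfold leo. intro H. rewrite <- hom_dom, <- hom_mul, <- H. reflexivity. Qed.

Lemma hom_compat s t : compat s t -> compat (f s) (f t).
Proof. intros [H1 H2]. split; rewrite <- hom_inv, <- hom_mul; apply hom_idem; assumption. Qed.

End Homomorphism.

Lemma hom_comp {S T U : invsg} (f : S -> T) (g : T -> U) :
  is_hom f -> is_hom g -> is_hom (fun s => g (f s)).
Proof.
  intros Hf Hg. split.
  - intros a b. rewrite (hom_mul f Hf), (hom_mul g Hg). reflexivity.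
  - rewrite (hom_zero f Hf), (hom_zero g Hg). reflexivity.
Qed.

Lemma morphism_comp {S T U : invsg} (f : S -> T) (g : T -> U) :
  is_morphism f -> is_morphism g -> is_morphism (fun s => g (f s)).
Proof.
  intros [Hf Jf] [Hg Jg]. split; [apply hom_comp; assumption|].
  intros a b j Hab Hj. apply Jg; [apply (hom_compat f Hf), Hab | apply Jf; assumption].
Qed.

Definition in_image {X Y : Type} (g : X -> Y) (l : list X) (y : Y) : Prop :=
  exists z, In z l /\ y = g z.

Lemma in_image_cons {X Y : Type} (g : X -> Y) x l y :
  in_image g (x :: l) y <-> y = g x \/ in_image g l y.
Proof.
  split.
  - intros [z [[<- | Hz] ->]]; [left; reflexivity | right; exists z; auto].
  - intros [-> | [z [Hz ->]]]; [exists x | exists z]; simpl; auto.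
Qed.

Lemma lub_nil {S : invsg} {X : Type} (g : X -> S) : is_lub (in_image g nil) zero.
Proof. split; [intros y [z [[] _]] | intros u _; apply leo_zero]. Qed.

Section Distributive.
Context {S : invsg} (D : distributive (S:=S)).
Implicit Types a b c d e f g h j s t u x y : S.

Lemma join_ex a b : compat a b -> exists j, is_join j a b.
Proof. apply (proj1 D). Qed.

Lemma join_mul_l a b j c : compat a b -> is_join j a b -> is_join (c ** j) (c ** a) (c ** b).
Proof. intros Hab Hj. apply (proj2 D a b j c Hab Hj). Qed.

Lemma idem_join_join j e f : idem e -> idem f -> idem_join j e f -> is_join j e f.
Proof.
  intros He Hf [Hj [H1 [H2 H3]]].
  destruct (join_ex e f (compat_idem e f He Hf)) as [j' Hj'].
  replace j with j'; [exact Hj'|].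
  apply leo_antisym.
  - apply (join_least j' e f); assumption.
  - apply H3; [apply (join_idem j' e f); assumption | |].
    + apply (join_ub1 _ _ _ Hj').
    + apply (join_ub2 _ _ _ Hj').
Qed.

Lemma dom_join a b j : compat a b -> is_join j a b -> is_join (dom j) (dom a) (dom b).
Proof.
  intros Hab Hj.
  assert (Hinv : forall x, leo x j -> inv j ** x = dom x).
  { intros x Hx. unfold leo in Hx. rewrite Hx at 1. rewrite mulA.
    fold (dom j). rewrite (idem_comm (dom j) (dom x)) by apply dom_idem.
    symmetry. rewrite (leo_dom x j Hx) at 1. apply idem_comm; apply dom_idem. }
  pose proof (join_mul_l a b j (inv j) Hab Hj) as H.
  rewrite (Hinv a (join_ub1 _ _ _ Hj)), (Hinv b (join_ub2 _ _ _ Hj)) in H. exact H.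
Qed.

Lemma idem_le_of_disjoint h e f g : idem h -> idem e -> idem g -> is_join f e g ->
  h ** f = h -> h ** e = zero -> leo h g.
Proof.
  intros Hh He Hg Hf Hhf Hhe.
  pose proof (join_mul_l e g f h (compat_idem e g He Hg) Hf) as H.
  rewrite Hhf, Hhe in H. apply join_zero_l in H.
  apply leo_of_idem_eq; [exact Hh|].
  rewrite <- (idem_comm h g Hh Hg). exact H.
Qed.

Lemma diff_spec d x y : is_diff d x y -> exists g, idem g /\ leo g (dom x) /\
  dom y ** g = zero /\ is_join (dom x) (dom y) g /\ d = x ** g.
Proof.
  intros [g [Hg [Hgx [Hyg [Hj ->]]]]]. exists g.
  split; [exact Hg|]. split; [exact Hgx|]. split; [exact Hyg|].
  split; [apply idem_join_join; [apply dom_idem | exact Hg | exact Hj] | reflexivity].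
Qed.

Lemma mul_idem_below a j g : leo a j -> leo g (dom a) -> j ** g = a ** g.
Proof.
  intros Haj Hga. rewrite (leo_idem_eq g (dom a) (dom_idem a) Hga) at 1.
  rewrite mulA, <- Haj. reflexivity.
Qed.

Lemma diff_join d a c : leo c a -> is_diff d a c -> is_join a c d.
Proof.
  intros Hca Hd. destruct (diff_spec d a c Hd) as [g [Hg [Hga [_ [Hj ->]]]]].
  assert (Hc : compat c (a ** g)) by exact (compat_below c (a ** g) a Hca (leo_mul_idem a g Hg)).
  destruct (join_ex _ _ Hc) as [k Hk].
  replace a with k at 1; [exact Hk|].
  assert (Hdk : dom k = dom a).
  { pose proof (dom_join _ _ _ Hc Hk) as H.
    rewrite dom_mul_idem, <- (leo_idem_eq g (dom a) (dom_idem a) Hga) in H by exact Hg.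
    exact (lub_unique _ _ _ H Hj). }
  assert (Hka : leo k a).
  { apply (join_least k c (a ** g)); [exact Hk | exact Hca | apply leo_mul_idem, Hg]. }
  unfold leo in Hka. rewrite Hka, Hdk. symmetry. apply leo_refl.
Qed.

Lemma lub_list_ex {X : Type} (g : X -> S) l a : (forall z, In z l -> leo (g z) a) ->
  exists J, is_lub (in_image g l) J /\ leo J a.
Proof.
  induction l as [|x l IH]; intro Hl.
  - exists zero. split; [apply lub_nil | apply leo_zero].
  - destruct IH as [J [HJ HJa]]; [intros z Hz; apply Hl; right; exact Hz|].
    assert (Hxa : leo (g x) a) by (apply Hl; left; reflexivity).
    destruct (join_ex (g x) J (compat_below _ _ a Hxa HJa)) as [j Hj].
    exists j. split.
    + apply (lub_ext _ _ j (fun y => iff_sym (in_image_cons g x l y))), (lub_cons _ J); assumption.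
    + apply (join_least j (g x) J); assumption.
Qed.

Lemma morphism_lub_list {T : invsg} (f : S -> T) {X : Type} (g : X -> S) l a J :
  is_morphism f -> (forall z, In z l -> leo (g z) a) -> is_lub (in_image g l) J ->
  is_lub (in_image (fun z => f (g z)) l) (f J).
Proof.
  intros [Hf Jf]. revert J. induction l as [|x l IH]; intros J Hl HJ.
  - rewrite <- (lub_unique _ _ _ (lub_nil g) HJ), (hom_zero f Hf). apply lub_nil.
  - assert (Hl' : forall z, In z l -> leo (g z) a) by (intros z Hz; apply Hl; right; exact Hz).
    destruct (lub_list_ex g l a Hl') as [J' [HJ' HJ'a]].
    assert (Hc : compat (g x) J') by (apply (compat_below _ _ a); [apply Hl; left |]; auto).
    destruct (join_ex _ _ Hc) as [j Hj].
    replace J with j.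
    + apply (lub_ext _ _ (f j) (fun y : T => iff_sym (in_image_cons _ x l y))).
      apply (lub_cons _ (f J')); [exact (IH J' Hl' HJ') | exact (Jf _ _ _ Hc Hj)].
    + apply (lub_unique (in_image g (x :: l))); [|exact HJ].
      apply (lub_ext _ _ j (fun y => iff_sym (in_image_cons g x l y))), (lub_cons _ J'); assumption.
Qed.

End Distributive.

Section Boolean.
Context {B : invsg} (D : distributive (S:=B)) (GB : gen_boolean_idem (S:=B)).
Implicit Types a b c d e g h j p q s x y : B.

Lemma diff_ex x y : leo y x -> exists d, is_diff d x y.
Proof.
  intro H.
  destruct (proj2 (proj2 GB) (dom x) (dom y) (dom_idem x) (dom_idem y) (leo_dom_leo _ _ H))
    as [g [Hg [Hgx [Hyg Hj]]]].
  exists (x ** g), g. repeat (split; [assumption|]). reflexivity.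
Qed.

Lemma compl_restrict_le p q e gp gq : idem p -> idem q -> idem e -> idem gp -> idem gq ->
  leo p q -> is_join p (p ** e) gp -> q ** e ** gq = zero -> leo (gq ** p) gp.
Proof.
  intros Hp Hq He Hgp Hgq Hpq Hjp Hgq0.
  assert (Hpe : p ** e = q ** e ** p).
  { rewrite <- mulA, <- (idem_comm p e Hp He), mulA, <- (leo_idem_eq p q Hq Hpq). reflexivity. }
  apply (idem_le_of_disjoint D (gq ** p) (p ** e) p gp); auto using idem_mul.
  - rewrite <- mulA, Hp. reflexivity.
  - rewrite <- mulA, (idem_l p) by exact Hp.
    rewrite Hpe, mulA, (idem_comm gq (q ** e) Hgq (idem_mul q e Hq He)), Hgq0, !mul0s.
    reflexivity.
Qed.

Lemma compl_le_join p1 p2 q e g1 g2 gq G : idem p1 -> idem p2 -> idem e ->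
  idem g1 -> idem g2 -> idem gq -> is_join q p1 p2 -> leo gq q ->
  is_join p1 (p1 ** e) g1 -> is_join p2 (p2 ** e) g2 -> q ** e ** gq = zero ->
  is_join G g1 g2 -> leo gq G.
Proof.
  intros Hp1 Hp2 He Hg1 Hg2 Hgq Hq Hgqq Hj1 Hj2 Hgq0 HG.
  assert (Hqi : idem q) by exact (join_idem q p1 p2 Hp1 Hp2 Hq).
  pose proof (join_mul_l D _ _ _ gq (compat_idem _ _ Hp1 Hp2) Hq) as H.
  rewrite (idem_comm gq q Hgq Hqi), <- (leo_idem_eq gq q Hqi Hgqq) in H.
  apply (join_least _ _ _ G H).
  - apply (leo_trans _ g1); [|exact (join_ub1 _ _ _ HG)].
    apply (compl_restrict_le p1 q e); auto. exact (join_ub1 _ _ _ Hq).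
  - apply (leo_trans _ g2); [|exact (join_ub2 _ _ _ HG)].
    apply (compl_restrict_le p2 q e); auto. exact (join_ub2 _ _ _ Hq).
Qed.

Section Ideal.
Context (J : B -> Prop) (HJ : additive_ideal J).

Lemma ideal_mul_r a s : J a -> J (a ** s).
Proof. intro Ha. apply (proj1 HJ a s Ha). Qed.

Lemma eps_le_iff d x y : leo y x -> is_diff d x y -> (eps J x y <-> J d).
Proof.
  intros Hyx Hd. destruct (diff_spec D d x y Hd) as [g [Hg [Hgx [Hyg [Hj ->]]]]].
  split.
  - intros [c [p [q [Hcx [Hcy [Hp [_ [HJp _]]]]]]]].
    destruct (diff_spec D p x c Hp) as [gc [Hgc [_ [_ [Hjc ->]]]]].
    assert (Hggc : leo g gc).
    { apply (idem_le_of_disjoint D g (dom c) (dom x) gc Hg (dom_idem c) Hgc Hjc).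
      - rewrite (idem_comm g (dom x) Hg (dom_idem x)). symmetry.
        apply leo_idem_eq; [apply dom_idem | exact Hgx].
      - rewrite (leo_dom c y Hcy), mulA, (idem_comm g (dom y) Hg (dom_idem y)), Hyg. apply mul0s. }
    rewrite (leo_idem_eq g gc Hgc Hggc), mulA. apply ideal_mul_r, HJp.
  - intro Hxg. exists y, (x ** g), zero.
    split; [exact Hyx|]. split; [apply leo_refl|]. split; [exact Hd|]. split; [apply diff_self|].
    split; [exact Hxg|]. rewrite <- (muls0 (x ** g)). apply ideal_mul_r, Hxg.
Qed.

Lemma eps_join_mul_idem a b j e : compat a b -> is_join j a b -> idem e ->
  eps J a (a ** e) -> eps J b (b ** e) -> eps J j (j ** e).
Proof.
  intros Hab Hj He Ha Hb.
  pose proof (join_ub1 _ _ _ Hj) as Haj. pose proof (join_ub2 _ _ _ Hj) as Hbj.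
  destruct (diff_ex a (a ** e) (leo_mul_idem a e He)) as [da Hda].
  destruct (diff_ex b (b ** e) (leo_mul_idem b e He)) as [db Hdb].
  destruct (diff_ex j (j ** e) (leo_mul_idem j e He)) as [dj Hdj].
  apply (eps_le_iff da a (a ** e) (leo_mul_idem a e He) Hda) in Ha.
  apply (eps_le_iff db b (b ** e) (leo_mul_idem b e He) Hdb) in Hb.
  apply (eps_le_iff dj j (j ** e) (leo_mul_idem j e He) Hdj).
  destruct (diff_spec D _ _ _ Hda) as [ga [Hga [Hgaa [_ [Hja ->]]]]].
  destruct (diff_spec D _ _ _ Hdb) as [gb [Hgb [Hgbb [_ [Hjb ->]]]]].
  destruct (diff_spec D _ _ _ Hdj) as [gj [Hgj [Hgjj [Hgj0 [_ ->]]]]].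
  rewrite dom_mul_idem in Hja, Hjb, Hgj0 by exact He.
  destruct (join_ex D ga gb (compat_idem _ _ Hga Hgb)) as [G HG].
  assert (HgjG : leo gj G)
    by (apply (compl_le_join (dom a) (dom b) (dom j) e ga gb); auto using dom_idem, dom_join).
  rewrite (leo_idem_eq gj G (join_idem G ga gb Hga Hgb HG) HgjG), mulA.
  apply ideal_mul_r, (proj2 HJ (a ** ga) (b ** gb)); [exact Ha | exact Hb | |].
  - apply (compat_below _ _ j).
    + exact (leo_trans _ _ _ (leo_mul_idem a ga Hga) Haj).
    + exact (leo_trans _ _ _ (leo_mul_idem b gb Hgb) Hbj).
  - rewrite <- (mul_idem_below a j ga Haj Hgaa), <- (mul_idem_below b j gb Hbj Hgbb).
    apply (join_mul_l D), HG. apply compat_idem; assumption.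
Qed.

End Ideal.

Lemma quotient_morphism {TS : invsg} (J : B -> Prop) (nu : B -> TS) :
  additive_ideal J -> distributive (S:=TS) -> is_hom nu -> (forall t, exists b, nu b = t) ->
  (forall a b, nu a = nu b <-> eps J a b) -> is_morphism nu.
Proof.
  intros HJ DT Hnu Hsurj Hker. split; [exact Hnu|]. intros a b j Hab Hj.
  destruct (join_ex DT _ _ (hom_compat nu Hnu a b Hab)) as [k Hk].
  assert (Hkj : leo k (nu j)).
  { apply (join_least k (nu a) (nu b) _ Hk); apply (hom_leo nu Hnu);
      [exact (join_ub1 _ _ _ Hj) | exact (join_ub2 _ _ _ Hj)]. }
  destruct (Hsurj k) as [w <-].
  assert (Hw : nu w = nu (j ** dom w)) by (rewrite (hom_mul nu Hnu), (hom_dom nu Hnu); exact Hkj).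
  assert (Hrestr : forall x, leo (nu x) (nu w) -> eps J x (x ** dom w)).
  { intros x Hx. apply Hker. rewrite (hom_mul nu Hnu).
    apply (leo_mul_idem_eq _ (nu j)); [|apply (hom_idem nu Hnu), dom_idem].
    rewrite <- (hom_mul nu Hnu), <- Hw. exact Hx. }
  replace (nu j) with (nu w); [exact Hk|].
  rewrite Hw. symmetry. apply Hker, (eps_join_mul_idem J HJ a b j (dom w) Hab Hj (dom_idem w)).
  - apply Hrestr, (join_ub1 _ _ _ Hk).
  - apply Hrestr, (join_ub2 _ _ _ Hk).
Qed.

End Boolean.

Lemma morphism_zero_ideal {S T : invsg} (f : S -> T) :
  is_morphism f -> additive_ideal (fun x => f x = zero).
Proof.
  intros [Hf Jf]. split.
  - intros a s Ha. rewrite !(hom_mul f Hf), Ha. split; [apply muls0 | apply mul0s].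
  - intros a b j Ha Hb Hab Hj. pose proof (Jf a b j Hab Hj) as H.
    rewrite Ha, Hb in H. exact (join_zero_l _ _ H).
Qed.

Lemma morphism_eps {S T : invsg} (f : S -> T) (J : S -> Prop) a b :
  distributive (S:=S) -> is_morphism f -> (forall x, J x -> f x = zero) ->
  eps J a b -> f a = f b.
Proof.
  intros D Hf HJ [c [p [q [Hca [Hcb [Hp [Hq [HJp HJq]]]]]]]].
  assert (Hdiff : forall x d, leo c x -> is_diff d x c -> J d -> f x = f c).
  { intros x d Hcx Hd HJd.
    pose proof (diff_join D d x c Hcx Hd) as Hj.
    destruct (diff_spec D d x c Hd) as [g [Hg [_ [_ [_ Hdg]]]]].
    assert (Hcd : compat c d)
      by (rewrite Hdg; exact (compat_below c _ x Hcx (leo_mul_idem x g Hg))).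
    pose proof (proj2 Hf c d x Hcd Hj) as H. rewrite (HJ d HJd) in H.
    exact (join_zero_r _ _ H). }
  rewrite (Hdiff a p Hca Hp HJp), (Hdiff b q Hcb Hq HJq). reflexivity.
Qed.

Lemma factor_through_surj {X Y Z : Type} (nu : X -> Y) (f : X -> Z) :
  (forall y, exists x, nu x = y) -> (forall a b, nu a = nu b -> f a = f b) ->
  exists g : Y -> Z, forall x, g (nu x) = f x.
Proof.
  intros Hsurj Hresp.
  exists (fun y => f (proj1_sig (constructive_indefinite_description _ (Hsurj y)))).
  intro x. apply Hresp. exact (proj2_sig (constructive_indefinite_description _ (Hsurj (nu x)))).
Qed.

Lemma quotient_join_lift {B TS : invsg} (nu : B -> TS) t1 t2 k :
  distributive (S:=B) -> is_morphism nu -> (forall t, exists b, nu b = t) ->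
  is_join k t1 t2 -> exists p1 p2 j, compat p1 p2 /\ is_join j p1 p2 /\
    nu p1 = t1 /\ nu p2 = t2 /\ nu j = k.
Proof.
  intros D [Hnu Jnu] Hsurj Hk.
  destruct (Hsurj k) as [w <-].
  assert (Hlift : forall t, leo t (nu w) -> exists p, leo p w /\ nu p = t).
  { intros t Ht. destruct (Hsurj t) as [p <-]. exists (w ** dom p). split.
    - apply leo_mul_idem, dom_idem.
    - rewrite (hom_mul nu Hnu), (hom_dom nu Hnu). symmetry. exact Ht. }
  destruct (Hlift t1 (join_ub1 _ _ _ Hk)) as [p1 [Hp1 <-]].
  destruct (Hlift t2 (join_ub2 _ _ _ Hk)) as [p2 [Hp2 <-]].
  assert (Hc : compat p1 p2) by exact (compat_below p1 p2 w Hp1 Hp2).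
  destruct (join_ex D p1 p2 Hc) as [j Hj].
  exists p1, p2, j. repeat (split; [assumption || reflexivity|]).
  exact (lub_unique _ _ _ (Jnu p1 p2 j Hc Hj) Hk).
Qed.

Lemma morphism_factor {B TS T : invsg} (nu : B -> TS) (f : B -> T) (g : TS -> T) :
  distributive (S:=B) -> is_morphism nu -> (forall t, exists b, nu b = t) ->
  is_morphism f -> (forall x, g (nu x) = f x) -> is_morphism g.
Proof.
  intros D Hnu Hsurj [Hf Jf] Hg. split; [split|].
  - intros x y. destruct (Hsurj x) as [p <-], (Hsurj y) as [q <-].
    rewrite <- (hom_mul nu (proj1 Hnu)), !Hg. apply (hom_mul f Hf).
  - rewrite <- (hom_zero nu (proj1 Hnu)), Hg. apply (hom_zero f Hf).
  - intros t1 t2 k _ Hk.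
    destruct (quotient_join_lift nu t1 t2 k D Hnu Hsurj Hk) as [p1 [p2 [j [Hc [Hj [<- [<- <-]]]]]]].
    rewrite !Hg. apply Jf; assumption.
Qed.

Section CuntzKrieger.
Context {S B : invsg} (beta : S -> B).

Lemma CK_ideal_additive : additive_ideal (CK_ideal beta).
Proof.
  split.
  - intros a s Ha. split; intros J HJ Hgen; destruct (proj1 HJ a s (Ha J HJ Hgen)); assumption.
  - intros a b j Ha Hb Hab Hj J HJ Hgen.
    exact (proj2 HJ a b j (Ha J HJ Hgen) (Hb J HJ Hgen) Hab Hj).
Qed.

Lemma CK_ideal_of_gen x : CK_gen beta x -> CK_ideal beta x.
Proof. intros Hx J _ Hgen. apply Hgen, Hx. Qed.

Lemma cover_bound a l : is_hom beta -> cover a l -> forall z, In z l -> leo (beta z) (beta a).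
Proof. intros Hb Hc z Hz. apply (hom_leo beta Hb), (proj1 Hc), Hz. Qed.

Lemma CK_ideal_killed {T : invsg} (theta : S -> T) (f : B -> T) :
  distributive (S:=B) -> is_hom beta -> is_morphism f -> cover_to_join theta ->
  (forall s, f (beta s) = theta s) -> forall x, CK_ideal beta x -> f x = zero.
Proof.
  intros D Hb Hf [_ Htheta] Hext x Hx. apply Hx; [apply morphism_zero_ideal, Hf|].
  intros y [a [l [j [Hc [Hj Hd]]]]]. destruct Hd as [g [_ [_ [Hjg [_ ->]]]]].
  assert (Hfj : f j = theta a).
  { apply (lub_unique (in_image theta l)); [|apply Htheta, Hc].
    apply (lub_ext (in_image (fun z => f (beta z)) l)).
    - intro t. unfold in_image. split; intros [z [Hz ->]]; exists z; rewrite Hext; auto.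
    - exact (morphism_lub_list D f beta l (beta a) j Hf (cover_bound a l Hb Hc) Hj). }
  (* [f (beta a) = f j], and [j] vanishes on the complement of its domain *)
  rewrite (hom_mul f (proj1 Hf)), Hext, <- Hfj, <- (hom_mul f (proj1 Hf)).
  rewrite <- (mul_dom j), <- mulA, Hjg, muls0. apply (hom_zero f (proj1 Hf)).
Qed.

Lemma quotient_cover_to_join {TS : invsg} (nu : B -> TS) :
  distributive (S:=B) -> gen_boolean_idem (S:=B) -> is_hom beta -> is_morphism nu ->
  (forall a b, eps (CK_ideal beta) a b -> nu a = nu b) -> cover_to_join (fun s => nu (beta s)).
Proof.
  intros D GB Hb Hnu Hker. split; [exact (hom_comp beta nu Hb (proj1 Hnu))|].
  intros a l Hc.
  destruct (lub_list_ex D beta l (beta a) (cover_bound a l Hb Hc)) as [j [Hj Hja]].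
  destruct (diff_ex GB (beta a) j Hja) as [d Hd].
  replace (nu (beta a)) with (nu j).
  - exact (morphism_lub_list D nu beta l (beta a) j Hnu (cover_bound a l Hb Hc) Hj).
  - symmetry. apply Hker, (eps_le_iff D _ CK_ideal_additive d); [exact Hja | exact Hd |].
    apply CK_ideal_of_gen. exists a, l, j. auto.
Qed.

End CuntzKrieger.

Theorem theorem1p3 (S B : invsg) (beta : S -> B) (hbeta : is_booleanization beta)
  (TS : invsg) (nu : B -> TS) (hTS : boolean TS) (hnu : is_hom nu)
  (hsurj : forall t : TS, exists b, nu b = t)
  (hker : forall a b : B, nu a = nu b <-> eps (CK_ideal beta) a b) :
  cover_to_join (fun s => nu (beta s)) /\
  (forall T : invsg, boolean T -> forall theta : S -> T, cover_to_join theta ->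
     unique_factor (fun s => nu (beta s)) theta).
Proof.
  destruct hbeta as [[DB GB] [hb [_ huniv]]].
  assert (Hnu : is_morphism nu)
    by exact (quotient_morphism DB GB _ nu (CK_ideal_additive beta) (proj1 hTS) hnu hsurj hker).
  split; [apply (quotient_cover_to_join beta nu DB GB hb Hnu), hker|].
  intros T HT theta Htheta.
  destruct (huniv T HT theta (proj1 Htheta)) as [f [Hf [Hext Huniq]]].
  assert (Hresp : forall a b, nu a = nu b -> f a = f b).
  { intros a b Hab. apply (morphism_eps f (CK_ideal beta) a b DB Hf); [|apply hker, Hab].
    exact (CK_ideal_killed beta theta f DB hb Hf Htheta Hext). }
  destruct (factor_through_surj nu f hsurj Hresp) as [g Hg].
  exists g. split; [|split].
  - exact (morphism_factor nu f g DB Hnu hsurj Hf Hg).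
  - intro s. rewrite Hg. apply Hext.
  - intros g' Hg' Hext' t. destruct (hsurj t) as [b <-]. rewrite Hg.
    apply (Huniq (fun b => g' (nu b))); [exact (morphism_comp nu g' Hnu Hg') | exact Hext'].
Qed.
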